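(* Let $T_n(y)$ and $U_n(y)$ denote the Chebyshev polynomials of the first and second kind, extended to all integer indices. For all $x,y,r\in\mathbb{C}$ and all integers $c,n$ with $n\ge c$ (and $x\neq0$ if $c<0$), \[ \sum_{k=c}^n r^{n-k}x^k\big(rT_k(y)+(xy-r)U_k(y)\big)=x^{n+1}y\,U_n(y)-r^{n-c+1}x^c y\,U_{c-1}(y) \] and \[ \sum_{k=c}^n r^{n-k}x^k\big((y^2-1)r\,U_{k-2}(y)+(xy-r)T_k(y)\big)=x^{n+1}y\,T_n(y)-r^{n-c+1}x^c y\,T_{c-1}(y). \]
   Context: The Chebyshev polynomials are defined by $T_0(y)=1$, $T_1(y)=y$, $T_n(y)=2yT_{n-1}(y)-T_{n-2}(y)$ and $U_0(y)=1$, $U_1(y)=2y$, $U_n(y)=2yU_{n-1}(y)-U_{n-2}(y)$ for $n\ge 2$; they are extended to negative indices so that these recurrences hold for all integers $n$ (equivalently $T_{-n}(y)=T_n(y)$ and $U_{-n}(y)=2yU_{-(n-1)}(y)-U_{-(n-2)}(y)$, so $U_{-1}(y)=0$). *)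

From HB Require Import structures.
From mathcomp Require Import all_boot all_order all_algebra.
From mathcomp Require Import reals complex.
Set Implicit Arguments. Unset Strict Implicit. Unset Printing Implicit Defensive.
Import Order.TTheory GRing.Theory Num.Theory.
Local Open Scope ring_scope.

Section Cheb.
Variable R : pzRingType.

Fixpoint chebT_pair (y : R) (n : nat) : R * R :=
  match n with
  | 0%N => (1, y)
  | m.+1 => let: (a, b) := chebT_pair y m in (b, 2%:R * y * b - a)
  end.

Fixpoint chebU_pair (y : R) (n : nat) : R * R :=
  match n with
  | 0%N => (1, 2%:R * y)
  | m.+1 => let: (a, b) := chebU_pair y m in (b, 2%:R * y * b - a)
  end.

Definition chebT_nat (y : R) (n : nat) : R := (chebT_pair y n).1.
Definition chebU_nat (y : R) (n : nat) : R := (chebU_pair y n).1.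

(* Extension to integer indices: T_{-n} = T_n, and U_{-1} = 0,
   U_{-(m+2)} = - U_m (the unique extension satisfying the recurrence). *)
Definition chebT (n : int) (y : R) : R :=
  match n with
  | Posz m => chebT_nat y m
  | Negz m => chebT_nat y m.+1
  end.

Definition chebU (n : int) (y : R) : R :=
  match n with
  | Posz m => chebU_nat y m
  | Negz 0 => 0
  | Negz m.+1 => - chebU_nat y m
  end.
End Cheb.

(* Both sums telescope.  With G_k = x^k y P_{k-1} (P = U, resp. P = T), the
   k-th summand is r^(n-k) (G_{k+1} - r G_k); this rests on the identities
   T_k = U_k - y U_{k-1} and T_k - y T_{k-1} = (y^2 - 1) U_{k-2}, valid for
   every integer k because both sides solve the Chebyshev recurrence
   f_{k+2} = 2 y f_{k+1} - f_k and agree at k = 0 and k = 1. *)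

From mathcomp Require Import all_boot all_order all_algebra.
From mathcomp Require Import reals complex.
From mathcomp Require Import ring zify.
Import Order.TTheory GRing.Theory Num.Theory.
Set Implicit Arguments. Unset Strict Implicit.
Local Open Scope ring_scope.

Section ChebyshevRecurrence.
Variables (R : comPzRingType) (y : R).

Definition cheb_rec (f : int -> R) :=
  forall k, f (k + 2) = 2%:R * y * f (k + 1) - f k.

Lemma cheb_rec_shift (a : int) (f : int -> R) :
  cheb_rec f -> cheb_rec (fun k => f (k + a)).
Proof. by move=> rf k; rewrite [k + 2 + a]addrAC [k + 1 + a]addrAC rf. Qed.

Lemma cheb_recZ (a : R) (f : int -> R) :
  cheb_rec f -> cheb_rec (fun k => a * f k).
Proof. by move=> rf k; rewrite rf; ring. Qed.

Lemma cheb_recB (f g : int -> R) :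
  cheb_rec f -> cheb_rec g -> cheb_rec (fun k => f k - g k).
Proof. by move=> rf rg k; rewrite rf rg; ring. Qed.

Lemma cheb_rec_eq0 (f : int -> R) :
  cheb_rec f -> f 0 = 0 -> f 1 = 0 -> forall k, f k = 0.
Proof.
move=> rf f0 f1.
have up (m : nat) : f m = 0 /\ f (m%:Z + 1) = 0.
  elim: m => [|m [fm fm1]]; first by [].
  have -> : m.+1%:Z = m%:Z + 1 by lia.
  by rewrite -addrA rf fm fm1; split=> //; ring.
have down (m : nat) : f (- m%:Z) = 0 /\ f (- m%:Z + 1) = 0.
  elim: m => [|m [fm fm1]]; first by rewrite oppr0.
  have e2 : - m.+1%:Z + 2 = - m%:Z + 1 by lia.
  have e1 : - m.+1%:Z + 1 = - m%:Z by lia.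
  split; last by rewrite e1.
  apply/eqP; rewrite -oppr_eq0; apply/eqP/esym.
  by have := rf (- m.+1%:Z); rewrite e2 e1 fm fm1 mulr0 sub0r.
by case=> m; [case: (up m) | rewrite NegzE; case: (down m.+1)].
Qed.

Lemma cheb_rec_uniq (f g : int -> R) :
  cheb_rec f -> cheb_rec g -> f 0 = g 0 -> f 1 = g 1 -> forall k, f k = g k.
Proof.
move=> rf rg e0 e1 k; apply: subr0_eq.
by apply: (cheb_rec_eq0 (cheb_recB rf rg) _ _ k); rewrite ?e0 ?e1 subrr.
Qed.

Lemma chebT_natSS (m : nat) :
  chebT_nat y m.+2 = 2%:R * y * chebT_nat y m.+1 - chebT_nat y m.
Proof. by rewrite /chebT_nat /=; case: chebT_pair. Qed.

Lemma chebU_natSS (m : nat) :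
  chebU_nat y m.+2 = 2%:R * y * chebU_nat y m.+1 - chebU_nat y m.
Proof. by rewrite /chebU_nat /=; case: chebU_pair. Qed.

Lemma chebT_rec : cheb_rec (fun k => chebT k y).
Proof.
case=> [m|[|[|m]]].
- have -> : m%:Z + 2 = m.+2%:Z by lia.
  have -> : m%:Z + 1 = m.+1%:Z by lia.
  exact: chebT_natSS.
- by change (y = 2%:R * y * 1 - y); ring.
- by change (1 = 2%:R * y * y - (2%:R * y * y - 1)); ring.
- have -> : Negz m.+2 + 2 = Negz m by lia.
  have -> : Negz m.+2 + 1 = Negz m.+1 by lia.
  by rewrite /= (chebT_natSS m.+1); ring.
Qed.

Lemma chebU_rec : cheb_rec (fun k => chebU k y).
Proof.
case=> [m|[|[|[|m]]]].
- have -> : m%:Z + 2 = m.+2%:Z by lia.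
  have -> : m%:Z + 1 = m.+1%:Z by lia.
  exact: chebU_natSS.
- by change (2%:R * y = 2%:R * y * 1 - 0); ring.
- by change (1 = 2%:R * y * 0 - - 1); ring.
- by change (0 = 2%:R * y * - 1 - - (2%:R * y)); ring.
- have -> : Negz m.+3 + 2 = Negz m.+1 by lia.
  have -> : Negz m.+3 + 1 = Negz m.+2 by lia.
  by rewrite /= (chebU_natSS m); ring.
Qed.

Lemma chebT_U (k : int) : chebT k y = chebU k y - y * chebU (k - 1) y.
Proof.
apply: (cheb_rec_uniq chebT_rec
  (cheb_recB chebU_rec (cheb_recZ y (cheb_rec_shift (-1) chebU_rec))) _ _ k).
- by change (1 = 1 - y * 0); ring.
- by change (y = 2%:R * y - y * 1); ring.
Qed.

Lemma chebT_subT (k : int) :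
  chebT k y - y * chebT (k - 1) y = (y ^+ 2 - 1) * chebU (k - 2) y.
Proof.
apply: (cheb_rec_uniq
  (cheb_recB chebT_rec (cheb_recZ y (cheb_rec_shift (-1) chebT_rec)))
  (cheb_recZ (y ^+ 2 - 1) (cheb_rec_shift (-2) chebU_rec)) _ _ k).
- by change (1 - y * y = (y ^+ 2 - 1) * - 1); ring.
- by change (y - y * 1 = (y ^+ 2 - 1) * 0); ring.
Qed.

End ChebyshevRecurrence.

Lemma sum_weighted_telescope (R : pzRingType) (r : R) (G : int -> R)
    (c : int) (N : nat) :
  \sum_(0 <= i < N.+1) r ^+ (N - i) * (G (c + i%:Z + 1) - r * G (c + i%:Z))
  = G (c + N%:Z + 1) - r ^+ N.+1 * G c.
Proof.
pose F i := r ^+ (N.+1 - i) * G (c + i%:Z).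
have -> : G (c + N%:Z + 1) - r ^+ N.+1 * G c = F N.+1 - F 0%N.
  by rewrite /F subnn expr0 mul1r subn0 addr0 -addrA -PoszD addn1.
rewrite -telescope_sumr //; apply: eq_big_nat => i /andP[_ iN].
by rewrite /F subSS subSn // exprSr -mulrA mulrBr -addrA -PoszD addn1.
Qed.

Lemma exprzD1 (F : fieldType) (x : F) (k : int) :
  (k < 0 -> x != 0) -> x ^ (k + 1) = x ^ k * x.
Proof.
case: k => m hx; first by rewrite exprzD_nat expr1z.
by rewrite exprzDr ?expr1z // unitfE hx.
Qed.

Section XPowTelescope.
Variables (F : fieldType) (x y r : F) (c : int) (N : nat).
Hypothesis x_neq0 : c < 0 -> x != 0.

Lemma sum_xpow_telescope (P S : int -> F) :
  (forall k, c <= k -> S k = x * y * P k - r * y * P (k - 1)) ->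
  \sum_(0 <= i < N.+1) r ^+ (N - i) * x ^ (c + i%:Z) * S (c + i%:Z)
  = x ^ (c + N%:Z + 1) * y * P (c + N%:Z) - r ^+ N.+1 * x ^ c * y * P (c - 1).
Proof.
move=> S_step; pose G k := x ^ k * y * P (k - 1).
have step k : c <= k -> x ^ k * S k = G (k + 1) - r * G k.
  move=> c_le_k; have xk1 : x ^ (k + 1) = x ^ k * x.
    by apply: exprzD1 => k_lt0; apply: x_neq0; apply: le_lt_trans k_lt0.
  by rewrite /G addrK xk1 S_step //; ring.
rewrite (eq_big_nat _ _
  (F2 := fun i => r ^+ (N - i) * (G (c + i%:Z + 1) - r * G (c + i%:Z)))).
  by rewrite sum_weighted_telescope /G addrK -!mulrA.
by move=> i _; rewrite -mulrA step // lerDl.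
Qed.

End XPowTelescope.

Theorem theorem11 (R : realType) (x y r : complex R) (c n : int) :
  c <= n -> (c < 0 -> x != 0) ->
  (\sum_(0 <= i < `|n - c|%N.+1)
      r ^+ (`|n - c|%N - i) * x ^ (c + i%:Z)
      * (r * chebT (c + i%:Z) y + (x * y - r) * chebU (c + i%:Z) y)
    = x ^ (n + 1) * y * chebU n y
      - r ^+ (`|n - c|%N.+1) * x ^ c * y * chebU (c - 1) y)
  /\
  (\sum_(0 <= i < `|n - c|%N.+1)
      r ^+ (`|n - c|%N - i) * x ^ (c + i%:Z)
      * ((y ^+ 2 - 1) * r * chebU (c + i%:Z - 2) y + (x * y - r) * chebT (c + i%:Z) y)
    = x ^ (n + 1) * y * chebT n y
      - r ^+ (`|n - c|%N.+1) * x ^ c * y * chebT (c - 1) y).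
Proof.
move=> c_le_n x_neq0; set N := `|n - c|%N.
have -> : n = c + N%:Z by rewrite /N; lia.
split.
- apply: (sum_xpow_telescope N x_neq0 (P := fun k => chebU k y)
    (S := fun k => r * chebT k y + (x * y - r) * chebU k y)) => k _.
  by rewrite chebT_U; ring.
- apply: (sum_xpow_telescope N x_neq0 (P := fun k => chebT k y)
    (S := fun k => (y ^+ 2 - 1) * r * chebU (k - 2) y
                   + (x * y - r) * chebT k y)) => k _.
  by rewrite mulrAC -chebT_subT; ring.
Qed.
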